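(* For every $\varepsilon>0$ there exists $M>0$ such that every instance with $\sum_{j=1}^n h(j)\ge M$ (recall $h(1)=1$) satisfies $H^{PW''}\le \left(\tfrac{12}{7}+\varepsilon\right)H^*$. That is, when $\sum_j h(j)\gg h(1)$, the approximation ratio $H^{PW''}/H^*$ is asymptotically at most $\tfrac{12}{7}$.
   Context: An instance consists of an integer $n\ge 1$ and growth rates $1=h(1)\ge h(2)\ge\cdots\ge h(n)>0$ of bamboos $b_1,\dots,b_n$. Bamboo Garden Trimming (discrete version): - All heights are $0$ initially. - On each day $t=1,2,\dots$ every bamboo $b_j$ grows by $h(j)$. - At the end of each day the gardener cuts exactly one bamboo $\sigma(t)\in\{1,\dots,n\}$ back to height $0$. The height of a schedule $\sigma:\mathbb{N}\to\{1,\dots,n\}$ is the supremum, over all days $t$ and all $j$, of the height of $b_j$ at the end of day $t$ just before the cut. $H^*$ denotes the infimum of this height over all schedules. Value of algorithm PW'': - Split $\{1,\dots,n\}$ into four sets: - $S_1=\{j: \tfrac23<h(j)\le 1\}$; - $S_2=\{j:\tfrac12<h(j)\le\tfrac23\}$; - $S_3=\{j: h(j)\le\tfrac12 \text{ and } \tfrac23 2^{-k}<h(j)\le 2^{-k}\text{ for some integer }k\ge1\}$; - $S_4=\{j: h(j)\le\tfrac12\text{ and } 2^{-(k+1)}<h(j)\le \tfrac23 2^{-k}\text{ for some integer }k\ge 1\}$. - Modified growths: $h''(j)=2^{-k}$ for $j\in S_3$ and $h''(j)=\tfrac23 2^{-k}$ for $j\in S_4$, with $k$ as in the definition of the set. -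 Let $\pi_1=|S_1|$, $sh_3=\sum_{j\in S_3}h''(j)$, $sh_4=\sum_{j\in S_4}h''(j)$, $\pi_3=\lfloor sh_3\rfloor$, $\pi_4=\lfloor sh_4\rfloor$, $f_3=sh_3-\pi_3$, $f_4=sh_4-\pi_4$. - Option (a): $\pi_R(a)=\lceil f_3+f_4\rceil$ and $z(a)=\pi_1+|S_2|+\pi_3+\pi_4+\pi_R(a)$. - Option (b): if $S_2=\emptyset$ put $z(b)=+\infty$. Otherwise let $h^*=\max_{j\in S_2}h(j)$ and $f_2=\tfrac12$ if $|S_2|$ is odd, $f_2=0$ if $|S_2|$ is even. Then $\pi_R(b)=\lceil f_2+f_3+f_4\rceil$ and $z(b)=2h^*\,(\pi_1+\lfloor |S_2|/2\rfloor+\pi_3+\pi_4+\pi_R(b))$. - The value returned by algorithm PW'' is $H^{PW''}=\min\{z(a),z(b)\}$. The paper takes this as the maximum height of the periodic pinwheel trimming schedule that it builds from these partitions. *)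

From Stdlib Require Import Reals Lra Lia ZArith Arith.
Open Scope R_scope.

(* Bamboos are indexed 1..n; h : nat -> R, values outside 1..n irrelevant. *)

Fixpoint sumR (f : nat -> R) (n : nat) : R :=
  match n with O => 0 | S m => sumR f m + f n end.

Fixpoint countN (P : nat -> bool) (n : nat) : nat :=
  match n with O => O | S m => (countN P m + (if P n then 1 else 0))%nat end.

(* max_{j=1..n, P j} f j  (0 if none; used only for positive f) *)
Fixpoint maxR (P : nat -> bool) (f : nat -> R) (n : nat) : R :=
  match n with O => 0 | S m => if P n then Rmax (maxR P f m) (f n) else maxR P f m end.

Definition floorR (x : R) : R := IZR (Int_part x).
Definition ceilR (x : R) : R := - IZR (Int_part (- x)).
Definition Rltb (x y : R) : bool := if Rlt_dec x y then true else false.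
Definition Rleb (x y : R) : bool := if Rle_dec x y then true else false.

(* A schedule cuts, at the end of day t >= 1, bamboo sigma t in {1..n}. *)
Definition valid_schedule (n : nat) (sigma : nat -> nat) : Prop :=
  forall t : nat, (1 <= t)%nat -> (1 <= sigma t <= n)%nat.

(* height of b_j at the end of day t, after the cut of that day (day 0 = start) *)
Fixpoint height_after (h : nat -> R) (sigma : nat -> nat) (j t : nat) : R :=
  match t with
  | O => 0
  | S t' => if Nat.eqb (sigma t) j then 0 else height_after h sigma j t' + h j
  end.

(* height of b_j at the end of day t >= 1, just before the cut *)
Definition height_before (h : nat -> R) (sigma : nat -> nat) (j t : nat) : R :=
  height_after h sigma j (t - 1) + h j.

(* the height (a supremum) of schedule sigma is <= K *)
Definition schedule_height_le (n : nat) (h : nat -> R) (sigma : nat -> nat) (K : R) : Prop :=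
  forall t j : nat, (1 <= t)%nat -> (1 <= j <= n)%nat -> height_before h sigma j t <= K.

(* For 0 < x <= 1/2, the unique integer k >= 1 with 2^-(k+1) < x <= 2^-k
   is floor(log2(1/x)). *)
Definition lev (x : R) : Z := Int_part (ln (/ x) / ln 2).
Definition p2 (x : R) : R := powerRZ 2 (- lev x).

Definition inS1 (x : R) : bool := Rltb (2/3) x.
Definition inS2 (x : R) : bool := Rltb (1/2) x && Rleb x (2/3).
Definition inS3 (x : R) : bool := Rleb x (1/2) && Rltb (2/3 * p2 x) x.
Definition inS4 (x : R) : bool := Rleb x (1/2) && Rleb x (2/3 * p2 x).

Definition PW_value (n : nat) (h : nat -> R) : R :=
  let pi1 := INR (countN (fun j => inS1 (h j)) n) in
  let c2 := countN (fun j => inS2 (h j)) n in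
  let sh3 := sumR (fun j => if inS3 (h j) then p2 (h j) else 0) n in
  let sh4 := sumR (fun j => if inS4 (h j) then 2/3 * p2 (h j) else 0) n in
  let pi3 := floorR sh3 in
  let pi4 := floorR sh4 in
  let f3 := sh3 - pi3 in
  let f4 := sh4 - pi4 in
  let za := pi1 + INR c2 + pi3 + pi4 + ceilR (f3 + f4) in
  let hstar := maxR (fun j => inS2 (h j)) h n in
  let f2 := if Nat.odd c2 then 1/2 else 0 in
  let zb := 2 * hstar * (pi1 + INR (Nat.div2 c2) + pi3 + pi4 + ceilR (f2 + f3 + f4)) in
  if Nat.eqb c2 0 then za else Rmin za zb.

From Stdlib Require Import Reals Lra Lia.
Open Scope R_scope.

(* Any schedule of height K satisfies K >= sum_j h(j): during t days bamboo j
   grows t h(j), which is at most K per cut of j plus a final height below K,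
   and only t cuts happen in total.  Conversely, rounding costs at most one
   unit in option (a) and 3/2 units in option (b), and the combination
   (4/7) z(a) + (3/7) z(b) >= min (z(a), z(b)) charges each bamboo at most
   (12/7) h(j).  Hence H^PW'' <= (12/7) sum_j h(j) + 10/7 <= (12/7 + eps) K
   as soon as sum_j h(j) >= 10 / (7 eps). *)

Lemma sumR_le f g n :
  (forall j, (1 <= j <= n)%nat -> f j <= g j) -> sumR f n <= sumR g n.
Proof.
  induction n as [|n IH]; intro Hfg; simpl; [lra|].
  assert (sumR f n <= sumR g n) by (apply IH; intros; apply Hfg; lia).
  assert (f (S n) <= g (S n)) by (apply Hfg; lia).
  lra.
Qed.

Lemma sumR_add f g n : sumR (fun j => f j + g j) n = sumR f n + sumR g n.
Proof. induction n; simpl; lra. Qed.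

Lemma sumR_scal c f n : sumR (fun j => c * f j) n = c * sumR f n.
Proof. induction n as [|n IH]; simpl; [|rewrite IH]; lra. Qed.

Lemma sumR_const c n : sumR (fun _ => c) n = INR n * c.
Proof. induction n as [|n IH]; simpl sumR; [simpl|rewrite IH, S_INR]; lra. Qed.

Lemma sumR_nonneg f n : (forall j, (1 <= j <= n)%nat -> 0 <= f j) -> 0 <= sumR f n.
Proof.
  intro Hf. replace 0 with (sumR (fun _ => 0) n) by (rewrite sumR_const; lra).
  now apply sumR_le.
Qed.

Lemma sumR_swap (F : nat -> nat -> R) n m :
  sumR (fun j => sumR (F j) m) n = sumR (fun s => sumR (fun j => F j s) n) m.
Proof.
  induction m as [|m IH]; simpl.
  - now rewrite sumR_const, Rmult_0_r.
  - now rewrite sumR_add, IH.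
Qed.

Lemma INR_countN P n : INR (countN P n) = sumR (fun j => if P j then 1 else 0) n.
Proof.
  induction n as [|n IH]; simpl countN; simpl sumR; [reflexivity|].
  rewrite plus_INR, IH. destruct (P (S n)); simpl; lra.
Qed.

Lemma sumR_eqb_out d n : (n < d)%nat -> sumR (fun j => if Nat.eqb d j then 1 else 0) n = 0.
Proof.
  induction n as [|n IH]; intro Hnd; simpl; [reflexivity|].
  rewrite IH by lia. destruct (Nat.eqb_spec d (S n)); [lia|lra].
Qed.

Lemma sumR_eqb_le1 d n : sumR (fun j => if Nat.eqb d j then 1 else 0) n <= 1.
Proof.
  induction n as [|n IH]; simpl; [lra|].
  destruct (Nat.eqb_spec d (S n)); [rewrite sumR_eqb_out by lia|]; lra.
Qed.

Lemma maxR_nonneg P f n : 0 <= maxR P f n.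
Proof.
  induction n as [|n IH]; simpl; [lra|].
  destruct (P (S n)); [eapply Rle_trans; [exact IH | apply Rmax_l] | exact IH].
Qed.

Lemma maxR_le P f n c :
  0 <= c -> (forall j, P j = true -> f j <= c) -> maxR P f n <= c.
Proof.
  intros Hc Hf. induction n as [|n IH]; simpl; [lra|].
  destruct (P (S n)) eqn:E; [apply Rmax_lub; auto | exact IH].
Qed.

Lemma ceilR_le x : ceilR x <= x + 1.
Proof. unfold ceilR. destruct (base_Int_part (- x)). lra. Qed.

Lemma INR_div2_le c : INR (Nat.div2 c) <= INR c / 2.
Proof.
  assert (Hc : (2 * Nat.div2 c <= c)%nat).
  { rewrite (Nat.div2_odd c) at 2. lia. }
  apply le_INR in Hc. rewrite mult_INR in Hc. simpl in Hc. lra.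
Qed.

Lemma Rmin_le_convex a b l : 0 <= l <= 1 -> Rmin a b <= l * a + (1 - l) * b.
Proof. intro Hl. unfold Rmin. destruct (Rle_dec a b); nra. Qed.

Lemma nonincreasing_ge_last (h : nat -> R) n :
  (forall j, (1 <= j)%nat -> (j < n)%nat -> h (S j) <= h j) ->
  forall j, (1 <= j <= n)%nat -> h n <= h j.
Proof.
  intros Hmono j Hj.
  assert (Hstep : forall k, (j + k <= n)%nat -> h (j + k)%nat <= h j).
  { induction k as [|k IH]; intro Hk; [rewrite Nat.add_0_r; lra|].
    replace (j + S k)%nat with (S (j + k)) by lia.
    eapply Rle_trans; [apply Hmono; lia | apply IH; lia]. }
  specialize (Hstep (n - j)%nat ltac:(lia)).
  now replace (j + (n - j))%nat with n in Hstep by lia.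
Qed.

Lemma p2_pos x : 0 < p2 x.
Proof. apply powerRZ_lt. lra. Qed.

(* p2 x = 2^-k with k = floor (log2 (1/x)) > log2 (1/x) - 1. *)
Lemma p2_lt_twice x : 0 < x -> p2 x < 2 * x.
Proof.
  intro Hx. unfold p2, lev. rewrite powerRZ_Rpower, opp_IZR by lra. unfold Rpower.
  assert (Hln2 : 0 < ln 2) by (pose proof ln_lt_2; lra).
  replace (2 * x) with (exp (ln 2 + ln x))
    by (rewrite exp_plus, !exp_ln by lra; reflexivity).
  apply exp_increasing.
  set (r := ln (/ x) / ln 2).
  assert (Hr : r * ln 2 = - ln x) by (unfold r; rewrite ln_Rinv by lra; field; lra).
  destruct (base_Int_part r) as [_ Hfloor].
  nra.
Qed.

Definition rounded3 (x : R) : R := if inS3 x then p2 x else 0.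
Definition rounded4 (x : R) : R := if inS4 x then 2/3 * p2 x else 0.

Lemma rounded3_nonneg x : 0 <= rounded3 x.
Proof. unfold rounded3. pose proof (p2_pos x). destruct (inS3 x); lra. Qed.

Lemma rounded4_nonneg x : 0 <= rounded4 x.
Proof. unfold rounded4. pose proof (p2_pos x). destruct (inS4 x); lra. Qed.

Lemma inS2_le x : inS2 x = true -> x <= 2/3.
Proof.
  unfold inS2, Rltb, Rleb.
  destruct (Rlt_dec _ _), (Rle_dec _ _); simpl; lra || discriminate.
Qed.

(* S1 and S2 pay since x > 2/3 resp. x > 1/2, S3 since p2 x < (3/2) x,
   and S4 since p2 x < 2 x. *)
Lemma class_charge_le x : 0 < x ->
  8 * ((if inS1 x then 1 else 0) + rounded3 x + rounded4 x)
  + 6 * (if inS2 x then 1 else 0) <= 12 * x.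
Proof.
  intro Hx. pose proof (p2_pos x). pose proof (p2_lt_twice x Hx).
  unfold rounded3, rounded4, inS1, inS2, inS3, inS4, Rltb, Rleb.
  repeat match goal with |- context [Rlt_dec ?a ?b] => destruct (Rlt_dec a b) end;
  repeat match goal with |- context [Rle_dec ?a ?b] => destruct (Rle_dec a b) end;
  simpl; lra.
Qed.

Section ClassSums.

Variables (n : nat) (h : nat -> R).

Definition pi1 : R := INR (countN (fun j => inS1 (h j)) n).
Definition count2 : nat := countN (fun j => inS2 (h j)) n.
Definition sh3 : R := sumR (fun j => rounded3 (h j)) n.
Definition sh4 : R := sumR (fun j => rounded4 (h j)) n.

Lemma class_sums_le : (forall j, (1 <= j <= n)%nat -> 0 < h j) ->
  8 * (pi1 + sh3 + sh4) + 6 * INR count2 <= 12 * sumR h n.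
Proof.
  intro Hpos. unfold pi1, count2, sh3, sh4. rewrite !INR_countN.
  rewrite <- !sumR_add, <- !sumR_scal, <- sumR_add.
  apply sumR_le. intros j Hj. now apply class_charge_le, Hpos.
Qed.

Lemma PW_value_le_class_sums :
  PW_value n h <= 8/7 * (pi1 + sh3 + sh4) + 6/7 * INR count2 + 10/7.
Proof.
  assert (Hhstar : 0 <= maxR (fun j => inS2 (h j)) h n <= 2/3).
  { split; [apply maxR_nonneg | apply maxR_le; [lra | intros; now apply inS2_le]]. }
  assert (HA : 0 <= pi1 + sh3 + sh4).
  { unfold pi1, sh3, sh4. pose proof (pos_INR (countN (fun j => inS1 (h j)) n)).
    assert (0 <= sumR (fun j => rounded3 (h j)) n)
      by (apply sumR_nonneg; intros; apply rounded3_nonneg).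
    assert (0 <= sumR (fun j => rounded4 (h j)) n)
      by (apply sumR_nonneg; intros; apply rounded4_nonneg).
    lra. }
  pose proof (pos_INR count2). pose proof (INR_div2_le count2).
  unfold PW_value. cbv zeta.
  change (fun j => if inS3 (h j) then p2 (h j) else 0) with (fun j => rounded3 (h j)).
  change (fun j => if inS4 (h j) then 2/3 * p2 (h j) else 0) with (fun j => rounded4 (h j)).
  fold pi1 count2 sh3 sh4.
  set (hstar := maxR _ h n) in *.
  set (f2 := if Nat.odd count2 then 1/2 else 0).
  assert (Hf2 : f2 <= 1/2) by (unfold f2; destruct (Nat.odd count2); lra).
  set (za := pi1 + INR count2 + floorR sh3 + floorR sh4
             + ceilR (sh3 - floorR sh3 + (sh4 - floorR sh4))).
  set (X := pi1 + INR (Nat.div2 count2) + floorR sh3 + floorR sh4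
            + ceilR (f2 + (sh3 - floorR sh3) + (sh4 - floorR sh4))).
  assert (Hza : za <= pi1 + sh3 + sh4 + INR count2 + 1)
    by (unfold za; pose proof (ceilR_le (sh3 - floorR sh3 + (sh4 - floorR sh4))); lra).
  assert (HX : X <= pi1 + sh3 + sh4 + INR count2 / 2 + 3/2)
    by (unfold X; pose proof (ceilR_le (f2 + (sh3 - floorR sh3) + (sh4 - floorR sh4))); lra).
  assert (Hzb : 2 * hstar * X <= 4/3 * (pi1 + sh3 + sh4) + 2/3 * INR count2 + 2) by nra.
  destruct (Nat.eqb_spec count2 0) as [Hc2|_].
  - rewrite Hc2 in Hza |- *. simpl in Hza |- *. lra.
  - pose proof (Rmin_le_convex za (2 * hstar * X) (4/7) ltac:(lra)). lra.
Qed.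

End ClassSums.

Lemma PW_value_le_sum n h : (forall j, (1 <= j <= n)%nat -> 0 < h j) ->
  PW_value n h <= 12/7 * sumR h n + 10/7.
Proof.
  intro Hpos.
  pose proof (PW_value_le_class_sums n h). pose proof (class_sums_le n h Hpos).
  lra.
Qed.

Lemma Rle_of_linear_bound a b c :
  (forall t : nat, INR t * a <= INR t * b + c) -> a <= b.
Proof.
  intro Hlin. destruct (Rle_lt_dec a b) as [|Hba]; [assumption|].
  destruct (INR_unbounded (c / (a - b))) as [t Ht].
  assert (Hc : c / (a - b) * (a - b) = c) by (field; lra).
  specialize (Hlin t). nra.
Qed.

Definition cut_count (sigma : nat -> nat) (j t : nat) : R :=
  sumR (fun s => if Nat.eqb (sigma s) j then 1 else 0) t.

Lemma sumR_cut_count_le sigma n t : sumR (fun j => cut_count sigma j t) n <= INR t.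
Proof.
  unfold cut_count. rewrite sumR_swap.
  replace (INR t) with (sumR (fun _ => 1) t) by (rewrite sumR_const; lra).
  apply sumR_le. intros s _. apply sumR_eqb_le1.
Qed.

Section Schedule.

Variables (n : nat) (h : nat -> R) (sigma : nat -> nat) (K : R).
Hypothesis height_le_K : schedule_height_le n h sigma K.

Lemma height_after_le j t : (1 <= j <= n)%nat -> height_after h sigma j t <= K - h j.
Proof.
  intro Hj. pose proof (height_le_K (S t) j ltac:(lia) Hj) as Hbefore.
  unfold height_before in Hbefore. rewrite Nat.sub_1_r in Hbefore. simpl in Hbefore. lra.
Qed.

(* Each cut removes a height of at most K. *)
Lemma growth_le_cuts j t : (1 <= j <= n)%nat ->
  INR t * h j <= K * cut_count sigma j t + height_after h sigma j t.
Proof.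
  intro Hj. unfold cut_count. induction t as [|t IH]; [simpl; lra|].
  pose proof (height_after_le j t Hj).
  rewrite S_INR. simpl sumR; simpl height_after.
  destruct (Nat.eqb (sigma (S t)) j); lra.
Qed.

Lemma sumR_le_height : 0 <= K -> sumR h n <= K.
Proof.
  intro HK0. apply (Rle_of_linear_bound _ _ (INR n * K - sumR h n)). intro t.
  assert (Hsum : sumR (fun j => INR t * h j) n
                 <= sumR (fun j => K * cut_count sigma j t + (K + -1 * h j)) n).
  { apply sumR_le. intros j Hj.
    pose proof (growth_le_cuts j t Hj). pose proof (height_after_le j t Hj). lra. }
  rewrite !sumR_add, !sumR_scal, sumR_const in Hsum.
  pose proof (sumR_cut_count_le sigma n t).
  nra.
Qed.

End Schedule.

Theorem proposition1 (eps : R) (Heps : 0 < eps) :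
  exists M : R, 0 < M /\
    forall (n : nat) (h : nat -> R),
      (1 <= n)%nat ->
      h 1%nat = 1 ->
      (forall j : nat, (1 <= j)%nat -> (j < n)%nat -> h (S j) <= h j) ->
      0 < h n ->
      M <= sumR h n ->
      forall (sigma : nat -> nat) (K : R),
        valid_schedule n sigma ->
        schedule_height_le n h sigma K ->
        PW_value n h <= (12/7 + eps) * K.
Proof.
  exists (10 / (7 * eps)). split; [apply Rdiv_lt_0_compat; lra|].
  intros n h Hn H1 Hmono Hlast HM sigma K _ HK.
  assert (Hpos : forall j, (1 <= j <= n)%nat -> 0 < h j).
  { intros j Hj. pose proof (nonincreasing_ge_last h n Hmono j Hj). lra. }
  assert (HK1 : 1 <= K).
  { rewrite <- H1. pose proof (height_after_le n h sigma K HK 1 0 ltac:(lia)).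
    simpl in *. lra. }
  pose proof (PW_value_le_sum n h Hpos) as Hupper.
  pose proof (sumR_le_height n h sigma K HK ltac:(lra)) as Hlower.
  assert (Hslack : 10/7 <= eps * K).
  { replace (10/7) with (eps * (10 / (7 * eps))) by (field; lra).
    apply Rmult_le_compat_l; lra. }
  lra.
Qed.
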